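(* Let $(A,\mathcal H)$ be a left Hopf algebroid such that ${}_s\mathcal H$ is $A$-flat. Let $B$ be a right $\mathcal H$-comodule $A^o$-subring of $\mathcal H$ via $t$ such that the inclusion $B\to\mathcal H$ is a pure morphism of right $B$-modules and $\gamma(B)\subseteq B\otimes_{A^o}\mathcal H$. Then $B=\mathcal H^{\mathrm{co}\,\mathcal H/\mathcal HB^+}$.
   Context: $\Bbbk$ is a field. A left bialgebroid $(A,\mathcal H)$: $\Bbbk$-algebras $A,\mathcal H$, algebra maps $s:A\to\mathcal H$, $t:A^o\to\mathcal H$ with commuting images, $A$-bilinear $\Delta:\mathcal H\to\mathcal H\otimes_A\mathcal H$, $\varepsilon:\mathcal H\to A$ (bimodule structure $a\cdot h\cdot b=s(a)t(b)h$; $\mathcal H\otimes_A\mathcal H$ = quotient of $\mathcal H\otimes\mathcal H$ by span of $t(a)x\otimes y-x\otimes s(a)y$), with $(\mathcal H,\Delta,\varepsilon)$ a coassociative counital $A$-coring, $\Delta$ an algebra map into the Takeuchi product $\{\sum x_i\otimes_Ay_i:\sum x_it(a)\otimes_Ay_i=\sum x_i\otimes_Ay_is(a)\ \forall a\}$, $\varepsilon(xs(\varepsilon(y)))=\varepsilon(xy)=\varepsilon(xt(\varepsilon(y)))$, $\varepsilon(1)=1$; $\Delta(x)=\sum x_1\otimes_Ax_2$, $\mathcal H^+=\ker\varepsilon$, $B^+=B\cap\mathcal H^+$. It is a left Hopf algebroid if $\beta:\mathcal H\otimes_{A^o}\mathcal H\to\mathcal H\otimes_A\mathcal H$, $x\otimes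 y\mapsto\sum x_1\otimes_Ax_2y$ is bijective ($\mathcal H\otimes_{A^o}\mathcal H$ = quotient by span of $xt(a)\otimes y-x\otimes t(a)y$); $\gamma(x)=\beta^{-1}(x\otimes_A1)$, and ''$\gamma(B)\subseteq B\otimes_{A^o}\mathcal H$'' means $\gamma(B)$ lies in the image of $B\otimes_{A^o}\mathcal H\to\mathcal H\otimes_{A^o}\mathcal H$. ''${}_s\mathcal H$ is $A$-flat'': flat as left $A$-module via $s$. A right $\mathcal H$-comodule $A^o$-subring via $t$: a subalgebra $B\supseteq t(A)$ with coassociative counital right $A$-linear coaction $\delta:B\to B\otimes_A\mathcal H$ ($b\cdot a=t(a)b$; $\mathcal H$ left via $s$) with $(\iota\otimes_A\mathcal H)\delta=\Delta\iota$. For a left ideal $I$ with $\varepsilon(I)=0$ and $\Delta(I)\subseteq$ image of $I\otimes_A\mathcal H+\mathcal H\otimes_AI$ (e.g. $I=\mathcal HB^+$), with projection $\pi$: $\mathcal H^{\mathrm{co}\,\mathcal H/I}=\{x:\sum\pi(x_1)\otimes_Ax_2=\pi(1)\otimes_Ax\}$. *)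

From HB Require Import structures.
From Stdlib Require List.
From mathcomp Require Import all_boot all_order all_algebra.
Set Implicit Arguments. Unset Strict Implicit. Unset Printing Implicit Defensive.
Import GRing.Theory.
Local Open Scope ring_scope.

(* An element of a balanced
   tensor product  X (x)_A Y  is represented by a finite list of pairs
   (a formal sum of simple tensors), and two such lists are declared equal
   in the tensor product iff they have the same image under EVERY
   biadditive balanced map into an abelian group (universal property of the
   tensor product).  Elements of H/I are represented by elements of H. *)

Section Bialgebroid.
Variables (k : fieldType) (A H : algType k) (s t : A -> H).

(* Equality in  P (x)_A H / (image of Z (x)_A H),  where the first factor
   ranges in a subset P of H (closed under t(A) * _) with right A-action
   x.a = t(a) x, and H is a left A-module via s.  With P = everything and
   Z = nothing this is H (x)_A H; with P = B it is B (x)_A H; with Z = I a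
   left ideal it is (H/I) (x)_A H. *)
Definition tensA_gen (P Z : H -> Prop) (l1 l2 : seq (H * H)) : Prop :=
  forall (V : zmodType) (f : H -> H -> V),
    (forall x x' y, P x -> P x' -> f (x + x') y = f x y + f x' y) ->
    (forall x y y', P x -> f x (y + y') = f x y + f x y') ->
    (forall a x y, P x -> f (t a * x) y = f x (s a * y)) ->
    (forall x y, Z x -> f x y = 0) ->
    \sum_(p <- l1) f p.1 p.2 = \sum_(p <- l2) f p.1 p.2.

Definition tensA := tensA_gen (fun _ => True) (fun _ => False).

Definition tensA3 (P : H -> Prop) (l1 l2 : seq (H * H * H)) : Prop :=
  forall (V : zmodType) (f : H -> H -> H -> V),
    (forall x x' y z, P x -> P x' -> f (x + x') y z = f x y z + f x' y z) ->
    (forall x y y' z, P x -> f x (y + y') z = f x y z + f x y' z) ->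
    (forall x y z z', P x -> f x y (z + z') = f x y z + f x y z') ->
    (forall a x y z, P x -> f (t a * x) y z = f x (s a * y) z) ->
    (forall a x y z, P x -> f x (t a * y) z = f x y (s a * z)) ->
    \sum_(p <- l1) f p.1.1 p.1.2 p.2 = \sum_(p <- l2) f p.1.1 p.1.2 p.2.

(* equality in H (x)_{A^o} H : relation  x t(a) (x) y = x (x) t(a) y *)
Definition tensAo (l1 l2 : seq (H * H)) : Prop :=
  forall (V : zmodType) (f : H -> H -> V),
    (forall x x' y, f (x + x') y = f x y + f x' y) ->
    (forall x y y', f x (y + y') = f x y + f x y') ->
    (forall a x y, f (x * t a) y = f x (t a * y)) ->
    \sum_(p <- l1) f p.1 p.2 = \sum_(p <- l2) f p.1 p.2.

Variables (Delta : H -> seq (H * H)) (eps : H -> A).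

Record is_left_bialgebroid : Prop := {
  s_lin : forall (c : k) a b, s (c *: a + b) = c *: s a + s b;
  s_mul : forall a b, s (a * b) = s a * s b;
  s_one : s 1 = 1;
  t_lin : forall (c : k) a b, t (c *: a + b) = c *: t a + t b;
  t_mul : forall a b, t (a * b) = t b * t a;   (* algebra map A^o -> H *)
  t_one : t 1 = 1;
  st_comm : forall a b, s a * t b = t b * s a;
  Delta_add : forall x y, tensA (Delta (x + y)) (Delta x ++ Delta y);
  Delta_scale : forall (c : k) x,
      tensA (Delta (c *: x)) [seq (c *: p.1, p.2) | p <- Delta x];
  Delta_s : forall a x, tensA (Delta (s a * x)) [seq (s a * p.1, p.2) | p <- Delta x];
  Delta_t : forall a x, tensA (Delta (t a * x)) [seq (p.1, t a * p.2) | p <- Delta x];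
  eps_add : forall x y, eps (x + y) = eps x + eps y;
  eps_scale : forall (c : k) x, eps (c *: x) = c *: eps x;
  eps_s : forall a x, eps (s a * x) = a * eps x;
  eps_t : forall a x, eps (t a * x) = eps x * a;
  Delta_coass : forall x,
      tensA3 (fun _ => True)
        [seq (q.1, q.2, p.2) | p <- Delta x, q <- Delta p.1]
        [seq (p.1, q.1, q.2) | p <- Delta x, q <- Delta p.2];
  eps_counit_l : forall x, \sum_(p <- Delta x) s (eps p.1) * p.2 = x;
  eps_counit_r : forall x, \sum_(p <- Delta x) t (eps p.2) * p.1 = x;
  (* Delta lands in the Takeuchi product and is an algebra map into it *)
  Delta_takeuchi : forall x a,
      tensA [seq (p.1 * t a, p.2) | p <- Delta x] [seq (p.1, p.2 * s a) | p <- Delta x];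
  Delta_mul : forall x y,
      tensA (Delta (x * y)) [seq (p.1 * q.1, p.2 * q.2) | p <- Delta x, q <- Delta y];
  Delta_one : tensA (Delta 1) [:: (1, 1)];
  eps_mul_s : forall x y, eps (x * s (eps y)) = eps (x * y);
  eps_mul_t : forall x y, eps (x * t (eps y)) = eps (x * y);
  eps_one : eps 1 = 1
}.

(* beta : H (x)_{A^o} H -> H (x)_A H,  x (x) y |-> sum x_1 (x) x_2 y *)
Definition beta (l : seq (H * H)) : seq (H * H) :=
  [seq (q.1, q.2 * p.2) | p <- l, q <- Delta p.1].

Definition is_left_Hopf : Prop :=
  is_left_bialgebroid /\
  (forall l1 l2, tensA (beta l1) (beta l2) -> tensAo l1 l2) /\
  (forall m, exists l, tensA (beta l) m).

(* gamma(B) \subseteq B (x)_{A^o} H : gamma(b) = beta^{-1}(b (x) 1) lies in the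
   image of B (x)_{A^o} H *)
Definition gamma_in (B : H -> Prop) : Prop :=
  forall b, B b -> exists l : seq (H * H),
    (forall p, List.In p l -> B p.1) /\ tensA (beta l) [:: (b, 1)].

(* {}_s H is flat as a left A-module: for every injective morphism g : M -> N
   of right A-modules, g (x)_A H : M (x)_A H -> N (x)_A H is injective. *)
Definition right_Amod (M : zmodType) (act : M -> A -> M) : Prop :=
  [/\ forall m m' a, act (m + m') a = act m a + act m' a,
      forall m a a', act m (a + a') = act m a + act m a',
      forall m a a', act m (a * a') = act (act m a) a'
    & forall m, act m 1 = m].

Definition tensMH (M : zmodType) (act : M -> A -> M) (l1 l2 : seq (M * H)) : Prop :=
  forall (V : zmodType) (f : M -> H -> V),
    (forall m m' y, f (m + m') y = f m y + f m' y) ->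
    (forall m y y', f m (y + y') = f m y + f m y') ->
    (forall a m y, f (act m a) y = f m (s a * y)) ->
    \sum_(p <- l1) f p.1 p.2 = \sum_(p <- l2) f p.1 p.2.

Definition s_flat : Prop :=
  forall (M N : zmodType) (actM : M -> A -> M) (actN : N -> A -> N) (g : M -> N),
    right_Amod actM -> right_Amod actN ->
    (forall m m', g (m + m') = g m + g m') ->
    (forall m a, g (actM m a) = actN (g m) a) ->
    injective g ->
    forall l1 l2 : seq (M * H),
      tensMH actN [seq (g p.1, p.2) | p <- l1] [seq (g p.1, p.2) | p <- l2] ->
      tensMH actM l1 l2.

Record is_comodule_subring (B : H -> Prop) (delta : H -> seq (H * H)) : Prop := {
  B_add : forall x y, B x -> B y -> B (x + y);
  B_scale : forall (c : k) x, B x -> B (c *: x);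
  B_mul : forall x y, B x -> B y -> B (x * y);
  B_t : forall a, B (t a);
  delta_in : forall b, B b -> forall p, List.In p (delta b) -> B p.1;
  delta_add : forall b b', B b -> B b' ->
      tensA_gen B (fun _ => False) (delta (b + b')) (delta b ++ delta b');
  delta_Alin : forall a b, B b ->
      tensA_gen B (fun _ => False) (delta (t a * b)) [seq (p.1, t a * p.2) | p <- delta b];
  delta_coass : forall b, B b ->
      tensA3 B [seq (q.1, q.2, p.2) | p <- delta b, q <- delta p.1]
               [seq (p.1, q.1, q.2) | p <- delta b, q <- Delta p.2];
  delta_counit : forall b, B b -> \sum_(p <- delta b) t (eps p.2) * p.1 = b;
  delta_Delta : forall b, B b -> tensA (delta b) (Delta b)
}.

(* the inclusion B -> H is a pure morphism of right B-modules: for every left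
   B-module N, B (x)_B N -> H (x)_B N is injective *)
Definition left_Bmod (B : H -> Prop) (N : zmodType) (act : H -> N -> N) : Prop :=
  [/\ forall b n n', B b -> act b (n + n') = act b n + act b n',
      forall b b' n, B b -> B b' -> act (b + b') n = act b n + act b' n,
      forall b b' n, B b -> B b' -> act (b * b') n = act b (act b' n)
    & forall n, act 1 n = n].

Definition tensB_gen (B P : H -> Prop) (N : zmodType) (act : H -> N -> N)
    (l1 l2 : seq (H * N)) : Prop :=
  forall (V : zmodType) (f : H -> N -> V),
    (forall x x' n, P x -> P x' -> f (x + x') n = f x n + f x' n) ->
    (forall x n n', P x -> f x (n + n') = f x n + f x n') ->
    (forall x b n, P x -> B b -> f (x * b) n = f x (act b n)) ->
    \sum_(p <- l1) f p.1 p.2 = \sum_(p <- l2) f p.1 p.2.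

Definition pure_inclusion (B : H -> Prop) : Prop :=
  forall (N : zmodType) (act : H -> N -> N), left_Bmod B act ->
    forall l1 l2 : seq (H * N),
      (forall p, List.In p l1 -> B p.1) -> (forall p, List.In p l2 -> B p.1) ->
      tensB_gen B (fun _ => True) act l1 l2 ->
      tensB_gen B B act l1 l2.

(* I = H B^+, the left ideal generated by B^+ = B \cap ker eps *)
Definition HBplus (B : H -> Prop) (x : H) : Prop :=
  exists l : seq (H * H),
    (forall p, List.In p l -> B p.2 /\ eps p.2 = 0) /\ x = \sum_(p <- l) p.1 * p.2.

(* H^{co H/I} = { x | sum pi(x_1) (x)_A x_2 = pi(1) (x)_A x } *)
Definition coinvariants (I : H -> Prop) (x : H) : Prop :=
  tensA_gen (fun _ => True) I (Delta x) [:: (1, x)].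

End Bialgebroid.

(** Let [G] be the map [g ∘ β⁻¹ : H ⊗_A H -> V] induced by a [B]-balanced map
    [g : H × H -> V]; it is well defined because [g] factors through
    [H ⊗_{A^o} H] (as [t(A) ⊆ B]) and [β] is bijective.  Multiplicativity of
    the translation map, [γ(hb) = γ(h)γ(b)], together with [γ(B) ⊆ B ⊗_{A^o} H]
    shows that [G] kills [HB⁺ ⊗_A H].  Hence for a coinvariant [x]
    [g(1, x) = G(1, x) = Σ G(x₁, x₂) = g(x, 1)], i.e. [1 ⊗ x = x ⊗ 1] in
    [H ⊗_B H].  Purity of [B ⊆ H], tested on the left [B]-module [H/B], turns
    this into [x ∈ B].  The converse inclusion only uses the coaction. *)

From HB Require Import structures.
From mathcomp Require Import all_boot all_order all_algebra.
From mathcomp Require Import ring_quotient generic_quotient boolp.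
Set Implicit Arguments. Unset Strict Implicit. Unset Printing Implicit Defensive.
Import GRing.Theory.
Local Open Scope ring_scope.
Local Open Scope quotient_scope.

Lemma morph_add0 (U V : zmodType) (f : U -> V) : {morph f : x y / x + y} -> f 0 = 0.
Proof. by move=> fD; apply: (@addrI _ (f 0)); rewrite -fD !addr0. Qed.

Lemma morph_add_sum (U V : zmodType) (f : U -> V) (I : Type) (r : seq I) (F : I -> U) :
  {morph f : x y / x + y} -> f (\sum_(i <- r) F i) = \sum_(i <- r) f (F i).
Proof. by move=> fD; apply: (big_morph f fD (morph_add0 fD)). Qed.

Lemma mem_In (T : eqType) (x : T) (l : seq T) : x \in l -> List.In x l.
Proof. by elim: l => [|y l IH] //=; rewrite in_cons => /orP [/eqP ->|/IH]; [left|right]. Qed.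

Section QuotientByProp.
Variables (V : zmodType) (P : V -> Prop).
Hypotheses (P0 : P 0) (PB : forall a b, P a -> P b -> P (a - b)).

Definition prop_pred : {pred V} := fun x => `[< P x >].

Lemma prop_pred_zmod_closed : zmod_closed prop_pred.
Proof.
split; first by rewrite unfold_in; apply/asboolP.
by move=> a b; rewrite !unfold_in => /asboolP Pa /asboolP Pb; apply/asboolP; exact: PB.
Qed.

HB.instance Definition _ := GRing.isZmodClosed.Build V prop_pred prop_pred_zmod_closed.

Definition quot_prop := Quotient.quot prop_pred.

Lemma pi_quot_prop_eq x y : \pi_quot_prop x = \pi_quot_prop y <-> P (x - y).
Proof. by rewrite (rwP eqP) -Quotient.idealrBE unfold_in; split => /asboolP. Qed.

Lemma pi_quot_prop_add x y : \pi_quot_prop (x + y) = \pi_quot_prop x + \pi_quot_prop y.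
Proof. exact: raddfD. Qed.

Lemma pi_quot_prop_eq0 x : \pi_quot_prop x = 0 <-> P x.
Proof. by rewrite -(raddf0 \pi_quot_prop) pi_quot_prop_eq subr0. Qed.

End QuotientByProp.

Section PureEqualizer.
Variables (k : fieldType) (H : algType k) (B : H -> Prop).

Definition B_balanced (V : zmodType) (g : H -> H -> V) : Prop :=
  [/\ forall x x' y, g (x + x') y = g x y + g x' y,
      forall x y y', g x (y + y') = g x y + g x y'
    & forall b x y, B b -> g (x * b) y = g x (b * y)].

(* [1 ⊗ x = x ⊗ 1] in [H ⊗_B H]. *)
Definition B_equalizer (x : H) : Prop :=
  forall (V : zmodType) (g : H -> H -> V), B_balanced g -> g 1 x = g x 1.

Hypotheses (B0 : B 0) (B1 : B 1) (BB : forall a b, B a -> B b -> B (a - b))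
  (BM : forall a b, B a -> B b -> B (a * b)).

Local Notation quotB := (quot_prop B0 BB).
Local Notation piB := (\pi_quotB : H -> quotB).

Definition actB (h : H) (n : quotB) : quotB := piB (h * repr n).

Lemma actB_pi b y : B b -> actB b (piB y) = piB (b * y).
Proof.
move=> Bb; apply/pi_quot_prop_eq; rewrite -mulrBr; apply: BM => //.
by apply/pi_quot_prop_eq; rewrite reprK.
Qed.

Lemma actB_left_Bmod : left_Bmod B actB.
Proof.
split.
- move=> b n n' Bb; rewrite /actB -pi_quot_prop_add; apply/pi_quot_prop_eq.
  rewrite -mulrDr -mulrBr.
  by apply: BM => //; apply/pi_quot_prop_eq; rewrite reprK pi_quot_prop_add !reprK.
- by move=> b b' n _ _; rewrite /actB mulrDl pi_quot_prop_add.
- by move=> b b' n Bb Bb'; rewrite [actB b' n]/actB actB_pi // mulrA.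
- by move=> n; rewrite /actB mul1r reprK.
Qed.

Lemma pure_equalizer : pure_inclusion B -> forall x, B_equalizer x -> B x.
Proof.
move=> pure x eqx.
have vanish : tensB_gen B (fun _ => True) actB [:: (1, piB x)] [::].
  move=> V f fD1 fD2 fB; rewrite big_seq1 big_nil /=.
  have /eqx -> : B_balanced (fun y z => f y (piB z)).
    split=> [y y' z|y z z'|b y z Bb]; first exact: fD1.
      by rewrite pi_quot_prop_add fD2.
    by rewrite fB // actB_pi.
  have /pi_quot_prop_eq0 -> := B1.
  exact: morph_add0 (fun n n' => fD2 x n n' I).
have [actD actD' actM act1] := actB_left_Bmod.
have inB : forall p, List.In p [:: (1, piB x)] -> B p.1 by move=> p [<-|].
have := pure _ _ actB_left_Bmod _ [::] inB (fun _ => False_ind _) vanish.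
by move=> /(_ _ actB actD' actD actM); rewrite big_seq1 big_nil act1 => /pi_quot_prop_eq0.
Qed.

End PureEqualizer.

Section Bialgebroid.
Variables (k : fieldType) (A H : algType k) (s t : A -> H)
  (Delta : H -> seq (H * H)) (eps : H -> A).

Local Notation tA := (tensA s t).
Local Notation sumf f l := (\sum_(p <- l) f p.1 p.2).

Definition A_balanced (V : zmodType) (f : H -> H -> V) : Prop :=
  [/\ forall x x' y, f (x + x') y = f x y + f x' y,
      forall x y y', f x (y + y') = f x y + f x y'
    & forall a x y, f (t a * x) y = f x (s a * y)].

Lemma tensAP l1 l2 :
  tA l1 l2 <-> forall (V : zmodType) (f : H -> H -> V), A_balanced f -> sumf f l1 = sumf f l2.
Proof.
split=> [e V f [fD1 fD2 fA]|e V f fD1 fD2 fA _]; last first.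
  by apply: e; split=> *; [apply: fD1|apply: fD2|apply: fA].
by apply: e => *; [apply: fD1|apply: fD2|apply: fA|].
Qed.

Lemma tensA_sym l1 l2 : tA l1 l2 -> tA l2 l1.
Proof. by move/tensAP=> e; apply/tensAP=> V f fbal; rewrite e. Qed.

Lemma tensA_trans l1 l2 l3 : tA l1 l2 -> tA l2 l3 -> tA l1 l3.
Proof. by move=> /tensAP e /tensAP e'; apply/tensAP=> V f fbal; rewrite e // e'. Qed.

Lemma tensA_cat l1 l2 m1 m2 : tA l1 l2 -> tA m1 m2 -> tA (l1 ++ m1) (l2 ++ m2).
Proof.
by move=> /tensAP e /tensAP e'; apply/tensAP=> V f fbal; rewrite !big_cat e // e'.
Qed.

Lemma A_balanced_mul (V : zmodType) (f : H -> H -> V) u w :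
  A_balanced f -> A_balanced (fun x y => f (x * u) (y * w)).
Proof.
by case=> fD1 fD2 fA; split=> *; rewrite ?mulrDl ?fD1 ?fD2 // -mulrA fA mulrA.
Qed.

Lemma A_balanced_mulr (V : zmodType) (f : H -> H -> V) w :
  A_balanced f -> A_balanced (fun x y => f x (y * w)).
Proof.
by case=> fD1 fD2 fA; split=> *; rewrite ?mulrDl ?fD1 ?fD2 // fA mulrA.
Qed.

Lemma sum_beta (V : zmodType) (f : H -> H -> V) l :
  sumf f (beta Delta l) = \sum_(p <- l) sumf (fun x y => f x (y * p.2)) (Delta p.1).
Proof. exact: big_allpairs_dep. Qed.

Section LeftBialgebroid.
Hypothesis bialg : is_left_bialgebroid s t Delta eps.

Lemma s_additive : {morph s : a b / a + b}.
Proof. by move=> a b; have := s_lin bialg 1 a b; rewrite !scale1r. Qed.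

Lemma eps_additive : {morph eps : x y / x + y}.
Proof. exact: eps_add bialg. Qed.

Lemma eps_opp x : eps (- x) = - eps x.
Proof. by rewrite -scaleN1r (eps_scale bialg) scaleN1r. Qed.

Lemma eps_tK a : eps (t a) = a.
Proof. by rewrite -[t a]mulr1 (eps_t bialg) (eps_one bialg) mul1r. Qed.

Lemma A_balanced_counit : A_balanced (fun x y => s (eps x) * y).
Proof.
split=> [x x' y|x y y'|a x y]; first by rewrite eps_additive s_additive mulrDl.
  exact: mulrDr.
by rewrite (eps_t bialg) (s_mul bialg) mulrA.
Qed.

(* The Takeuchi condition on [Delta z] is what makes this map [A]-balanced. *)
Lemma A_balanced_coproduct (V : zmodType) (f : H -> H -> V) z w : A_balanced f ->
  A_balanced (fun x y => \sum_(u <- Delta z) f (u.1 * x) (u.2 * y * w)).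
Proof.
move=> fbal; have [fD1 fD2 _] := fbal.
split=> [x x' y|x y y'|a x y]; rewrite -?big_split /=.
- by apply: eq_bigr => u _; rewrite mulrDr fD1.
- by apply: eq_bigr => u _; rewrite mulrDr mulrDl fD2.
have := (tensAP _ _).1 (Delta_takeuchi bialg z a) _ _ (A_balanced_mul x (y * w) fbal).
rewrite !big_map /= => takeuchi.
transitivity (\sum_(u <- Delta z) f (u.1 * t a * x) (u.2 * (y * w))).
  by apply: eq_bigr => u _; rewrite !mulrA.
by rewrite takeuchi; apply: eq_bigr => u _; rewrite !mulrA.
Qed.

(* [γ(hb) = γ(h) γ(b)] for the translation map [γ = β⁻¹(_ ⊗ 1)]. *)
Lemma beta_translation_mul lh lb h b v :
  tA (beta Delta lh) [:: (h, 1)] -> tA (beta Delta lb) [:: (b, 1)] ->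
  tA (beta Delta [seq (q.1 * r.1, r.2 * q.2 * v) | q <- lh, r <- lb]) [:: (h * b, v)].
Proof.
move=> /tensAP eh /tensAP eb; apply/tensAP => V f fbal.
rewrite sum_beta big_allpairs_dep big_seq1 /=.
transitivity (\sum_(q <- lh) \sum_(u <- Delta q.1) f (u.1 * b) (u.2 * q.2 * v)).
  apply: eq_bigr => q _.
  pose Phi x y := \sum_(u <- Delta q.1) f (u.1 * x) (u.2 * y * (q.2 * v)).
  transitivity (sumf Phi (beta Delta lb)).
    rewrite sum_beta; apply: eq_bigr => r _.
    rewrite ((tensAP _ _).1 (Delta_mul bialg q.1 r.1) _ _ (A_balanced_mulr _ fbal)).
    rewrite big_allpairs_dep exchange_big /=.
    by apply: eq_bigr => w _; apply: eq_bigr => u _; rewrite !mulrA.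
  rewrite (eb _ _ (A_balanced_coproduct _ _ fbal)) big_seq1.
  by apply: eq_bigr => u _; rewrite mulr1 !mulrA.
transitivity (sumf (fun x y => f (x * b) (y * v)) (beta Delta lh)).
  by rewrite (sum_beta (fun x y => f (x * b) (y * v))).
by rewrite (eh _ _ (A_balanced_mul b v fbal)) big_seq1 mul1r.
Qed.

Lemma beta_translation_counit lb b :
  tA (beta Delta lb) [:: (b, 1)] -> \sum_(r <- lb) r.1 * r.2 = s (eps b).
Proof.
move=> /tensAP/(_ _ _ A_balanced_counit).
rewrite big_seq1 mulr1 (sum_beta (fun x y => s (eps x) * y)) => <-.
apply: eq_bigr => r _; rewrite -[in LHS](eps_counit_l bialg r.1) mulr_suml.
by apply: eq_bigr => p _; rewrite mulrA.
Qed.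

Section ComoduleSubring.
Variables (B : H -> Prop) (delta : H -> seq (H * H)).
Hypothesis comod : is_comodule_subring s t Delta eps B delta.

Lemma comodule_subring_opp x : B x -> B (- x).
Proof. by move=> Bx; rewrite -scaleN1r; apply: (B_scale comod). Qed.

Lemma comodule_subring_sub x y : B x -> B y -> B (x - y).
Proof. by move=> Bx By; apply: (B_add comod) => //; apply: comodule_subring_opp. Qed.

Lemma comodule_subring_1 : B 1.
Proof. by rewrite -(t_one bialg); apply: (B_t comod). Qed.

Lemma comodule_subring_0 : B 0.
Proof. by rewrite -(subrr 1); apply: comodule_subring_sub; apply: comodule_subring_1. Qed.

Lemma sub_t_eps_HBplus y : B y -> HBplus eps B (y - t (eps y)).
Proof.
move=> By; exists [:: (1, y - t (eps y))]; rewrite big_seq1 mul1r; split=> // p [<-|//].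
split; first by apply: comodule_subring_sub => //; apply: (B_t comod).
by rewrite eps_additive eps_opp eps_tK subrr.
Qed.

(* [Δ(x) = δ(x)] has its first legs in [B], and [b - t(ε b) ∈ HB⁺] for [b ∈ B]. *)
Lemma comodule_subring_coinvariant x : B x -> coinvariants s t Delta (HBplus eps B) x.
Proof.
move=> Bx V f fD1 fD2 fA fI.
have fbal : A_balanced f by split=> *; [apply: fD1|apply: fD2|apply: fA].
rewrite -((tensAP _ _).1 (delta_Delta comod Bx) _ _ fbal) big_seq1 /=.
transitivity (\sum_(p <- delta x) f 1 (s (eps p.1) * p.2)).
  apply: eq_big_seq => p /mem_In /(delta_in comod Bx) Bp.
  have Ip := sub_t_eps_HBplus Bp.
  by rewrite -{1}[p.1](subrK (t (eps p.1))) fD1 // (fI _ _ Ip) add0r -[t _]mulr1 fA.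
rewrite -(morph_add_sum _ _ (fun y y' => fD2 1 y y' I)); congr (f 1 _).
rewrite -[in RHS](eps_counit_l bialg x).
exact: ((tensAP _ _).1 (delta_Delta comod Bx) _ _ A_balanced_counit).
Qed.

End ComoduleSubring.

Section TranslationMap.
Hypothesis beta_inj : forall l1 l2, tA (beta Delta l1) (beta Delta l2) -> tensAo t l1 l2.
Hypothesis beta_surj : forall m, exists l, tA (beta Delta l) m.
Variables (B : H -> Prop) (V : zmodType) (g : H -> H -> V).
Hypotheses (B_t : forall a, B (t a)) (gamma_B : gamma_in s t Delta B)
  (g_bal : B_balanced B g).

Definition beta_lift m : seq (H * H) := projT1 (cid (beta_surj m)).

Lemma beta_liftP m : tA (beta Delta (beta_lift m)) m.
Proof. exact: projT2 (cid (beta_surj m)). Qed.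

Lemma B_balanced_beta l l' : tA (beta Delta l) (beta Delta l') -> sumf g l = sumf g l'.
Proof. by case: g_bal => gD1 gD2 gB /beta_inj; apply=> // a x y; apply: gB. Qed.

Definition g_beta_inv m : V := sumf g (beta_lift m).

Lemma g_beta_invE l : g_beta_inv (beta Delta l) = sumf g l.
Proof. exact/B_balanced_beta/beta_liftP. Qed.

Lemma g_beta_inv_eq m m' : tA m m' -> g_beta_inv m = g_beta_inv m'.
Proof.
move=> e; apply: B_balanced_beta; apply: tensA_trans (beta_liftP m) _.
exact: tensA_trans e (tensA_sym (beta_liftP m')).
Qed.

Lemma g_beta_inv_cat m m' : g_beta_inv (m ++ m') = g_beta_inv m + g_beta_inv m'.
Proof.
rewrite {2 3}/g_beta_inv -big_cat -g_beta_invE; apply/g_beta_inv_eq/tensA_sym.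
by rewrite /beta allpairs_cat; apply: tensA_cat; apply: beta_liftP.
Qed.

Lemma g_beta_inv_sum m : g_beta_inv m = \sum_(p <- m) g_beta_inv [:: (p.1, p.2)].
Proof.
elim: m => [|[u v] m IH]; last by rewrite -cat1s g_beta_inv_cat IH big_cons.
by rewrite big_nil -[[::]]/(beta Delta [::]) g_beta_invE big_nil.
Qed.

Lemma g_beta_inv_balanced : A_balanced (fun u v => g_beta_inv [:: (u, v)]).
Proof.
split=> [x x' y|x y y'|a x y]; rewrite -?g_beta_inv_cat; apply: g_beta_inv_eq.
all: by apply/tensAP => W f [fD1 fD2 fA]; rewrite ?big_cat !big_seq1 ?fD1 ?fD2 ?fA.
Qed.

Lemma g_beta_inv_mul_Bplus h b v : B b -> eps b = 0 -> g_beta_inv [:: (h * b, v)] = 0.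
Proof.
move=> Bb eb; have [lb [lbB elb]] := gamma_B Bb; have [_ gD2 gB] := g_bal.
rewrite (g_beta_inv_eq (tensA_sym (beta_translation_mul v (beta_liftP _) elb))).
rewrite g_beta_invE big_allpairs_dep big1 // => q _ /=.
transitivity (g q.1 ((\sum_(r <- lb) r.1 * r.2) * (q.2 * v))).
  rewrite mulr_suml (morph_add_sum _ _ (gD2 q.1)).
  by apply: eq_big_seq => r /mem_In /lbB Br; rewrite gB // !mulrA.
rewrite (beta_translation_counit elb) eb (morph_add0 s_additive) mul0r.
exact: morph_add0 (gD2 q.1).
Qed.

Lemma g_beta_inv_HBplus y v : HBplus eps B y -> g_beta_inv [:: (y, v)] = 0.
Proof.
have [GD1 _ _] := g_beta_inv_balanced.
case=> l [lB ->]; rewrite (morph_add_sum _ _ (fun x x' => GD1 x x' v)) big_seq big1 //.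
by move=> p /mem_In /lB [Bp ep]; apply: g_beta_inv_mul_Bplus.
Qed.

Lemma coinvariant_B_equalizer x :
  coinvariants s t Delta (HBplus eps B) x -> g 1 x = g x 1.
Proof.
have [GD1 GD2 GA] := g_beta_inv_balanced.
move=> /(_ V (fun u v => g_beta_inv [:: (u, v)]) (fun x x' y _ _ => GD1 x x' y)
          (fun x y y' _ => GD2 x y y') (fun a x y _ => GA a x y) g_beta_inv_HBplus).
rewrite -g_beta_inv_sum big_seq1 => coinv.
have Delta_beta : tA (beta Delta [:: (x, 1)]) (Delta x).
  by apply/tensAP => W f _; rewrite sum_beta big_seq1; apply: eq_bigr => p _; rewrite mulr1.
have beta_1 : tA (beta Delta [:: (1, x)]) [:: (1, x)].
  apply/tensAP => W f fbal; rewrite sum_beta big_seq1.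
  have := (tensAP _ _).1 (Delta_one bialg) _ _ (A_balanced_mulr x fbal).
  by rewrite !big_seq1 mul1r.
have -> : g 1 x = sumf g [:: (1, x)] by rewrite big_seq1.
have -> : g x 1 = sumf g [:: (x, 1)] by rewrite big_seq1.
by rewrite -!g_beta_invE (g_beta_inv_eq Delta_beta) coinv (g_beta_inv_eq beta_1).
Qed.

End TranslationMap.

End LeftBialgebroid.
End Bialgebroid.

Theorem theorem2p13 (k : fieldType) (A H : algType k) (s t : A -> H)
  (Delta : H -> seq (H * H)) (eps : H -> A)
  (B : H -> Prop) (delta : H -> seq (H * H)) :
  is_left_Hopf s t Delta eps ->
  s_flat s ->
  is_comodule_subring s t Delta eps B delta ->
  pure_inclusion B ->
  gamma_in s t Delta B ->
  forall x : H, B x <-> coinvariants s t Delta (HBplus eps B) x.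
Proof.
move=> [bialg [beta_inj beta_surj]] _ comod pure gamma_B x; split.
  exact: (comodule_subring_coinvariant bialg comod).
move=> coinv; apply: (pure_equalizer (comodule_subring_0 bialg comod)
  (comodule_subring_1 bialg comod) (comodule_subring_sub comod) (B_mul comod) pure).
move=> V g g_bal.
exact: (coinvariant_B_equalizer bialg beta_inj beta_surj (B_t comod) gamma_B g_bal coinv).
Qed.
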